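(* The function $\underline\Gamma(b):=\min_{0\le a\le b}\Gamma(a,b)$, $b\ge0$, is continuous and strictly decreasing, and $\underline\Gamma(b)\to-\infty$ as $b\to\infty$. For each $b>0$, the function $a\mapsto\Gamma(a,b)$ on $[0,b]$ has a unique minimizer $a(b)$. This minimizer is either $0$, or it is the unique $\hat a\in(0,b)$ with $\gamma(\hat a,b)=0$. Define $(a^*,b^* )$ as follows. If $\Gamma(0,0)=\delta-q\rho-\beta\psi_X'(0+)\le0$, set $a^*=b^*=0$. Otherwise, let $b^*>0$ be the unique root of $\underline\Gamma(b^* )=0$ and set $a^*=a(b^* )$. Then exactly one of the following holds: (i) $a^*=b^*=0$ and $\delta-q\rho-\beta\psi_X'(0+)\le0$; (ii-1) $a^*=0<b^*$, $\Gamma(0,b^* )=0$, $\beta^{-1}-Z^{(q)}(b^* )\ge0$, and $\delta-q\rho-\beta\psi_X'(0+)>0$; (ii-2) $0<a^*<b^*$, $\Gamma(a^*,b^* )=\gamma(a^*,b^* )=0$, and $\delta-q\rho-\beta\psi_X'(0+)>0$.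
   Context: Let $Y$ be a spectrally positive Lévy process (no negative jumps, not a subordinator) with Laplace exponent $\psi_Y(\theta)=\log\mathbb E[e^{-\theta Y_1}]$, $\theta\ge0$, and $\mathbb E[Y_1]=-\psi_Y'(0+)<\infty$. Fix $q>0$, $\delta>0$, $\beta\in(0,1)$, $\rho\in\mathbb R$. Let $X_t=Y_t-\delta t$, with $\psi_X(\theta)=\psi_Y(\theta)+\delta\theta$. Scale functions: $\mathbb W^{(q)}$ (resp. $W^{(q)}$) is the function $\mathbb R\to[0,\infty)$ that vanishes on $(-\infty,0)$, is continuous and strictly increasing on $[0,\infty)$, and has Laplace transform $\int_0^\infty e^{-\theta x}\mathbb W^{(q)}(x)\,dx=1/(\psi_Y(\theta)-q)$ (resp. $1/(\psi_X(\theta)-q)$) for $\theta$ large enough. Set $\mathbb Z^{(q)}(x)=1+q\int_0^x\mathbb W^{(q)}(y)\,dy$, $Z^{(q)}(x)=1+q\int_0^xW^{(q)}(y)\,dy$, $\overline Z^{(q)}(x)=\int_0^xZ^{(q)}(z)\,dz$, all with the conventions $Z^{(q)}=1$ and $\overline Z^{(q)}(x)=x$ for $x\le0$. Let $R^{(q)}(z)=\overline Z^{(q)}(z)+\psi_X'(0+)/q$ and $$\tilde r^{(q)}_c(z)=R^{(q)}(z)+\delta\int_c^z\mathbb W^{(q)}(z-y)Z^{(q)}(y)\,dy.$$ For $0\le a\le b$, define $$\Gamma(a,b)=\delta\mathbb Z^{(q)}(a)-q\rho-q\beta\,\tilde r^{(q)}_{b-a}(b),\qquad \gamma(a,b)=\beta^{-1}-Z^{(q)}(b-a).$$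 *)

From Stdlib Require Import Reals Lra Classical ClassicalEpsilon.
Open Scope R_scope.

(* Riemann integral of f over [a,b] (value of RiemannInt when f is
   Riemann integrable; an unspecified real otherwise). *)
Definition Rint (f : R -> R) (a b : R) : R :=
  epsilon (inhabits 0)
    (fun v => exists pr : Riemann_integrable f a b, RiemannInt pr = v).

Definition improper_int_eq (f : R -> R) (a v : R) : Prop :=
  (forall T, a <= T -> inhabited (Riemann_integrable f a T)) /\
  (forall eps, 0 < eps -> exists M, forall T, M <= T -> a <= T ->
      Rabs (Rint f a T - v) < eps).

Definition cont_on_nonneg (f : R -> R) : Prop :=
  forall x, 0 <= x -> forall eps, 0 < eps -> exists eta, 0 < eta /\
    forall y, 0 <= y -> Rabs (y - x) < eta -> Rabs (f y - f x) < eps.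

(* psi (restricted to [0,infty)) is psi_Y(theta) = log E[exp(-theta Y_1)] for a
   spectrally positive Levy process Y with finite mean which is not a
   subordinator, and dpsi0 = psi_Y'(0+) = -E[Y_1].
   Since no measure theory is available, the Levy-Khintchine form
     psi(t) = c t + s^2 t^2/2 + int_(0,infty) (e^{-tx} - 1 + t x) Pi(dx),
     int (x /\ x^2) Pi(dx) < infty,
   is encoded via Bernstein's theorem: psi(0)=0, psi continuous at 0+, smooth
   on (0,infty) with psi'' completely monotone, psi'(0+) = dpsi0 finite;
   "not a subordinator" <-> psi takes a positive value. *)
Definition spos_levy_exponent (psi : R -> R) (dpsi0 : R) : Prop :=
  psi 0 = 0 /\
  (forall eps, 0 < eps -> exists eta, 0 < eta /\
      forall t, 0 <= t < eta -> Rabs (psi t) < eps) /\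
  (exists D : nat -> R -> R,
      (forall x, 0 < x -> D 0%nat x = psi x) /\
      (forall n x, 0 < x -> derivable_pt_lim (D n) x (D (S n) x)) /\
      (forall n x, 0 < x -> 0 <= (-1) ^ n * D (n + 2)%nat x) /\
      (forall eps, 0 < eps -> exists eta, 0 < eta /\
          forall t, 0 < t < eta -> Rabs (D 1%nat t - dpsi0) < eps)) /\
  (exists th, 0 < th /\ 0 < psi th).

Definition is_scale_function (psi : R -> R) (q : R) (W : R -> R) : Prop :=
  (forall x, x < 0 -> W x = 0) /\
  cont_on_nonneg W /\
  (forall x y, 0 <= x -> x < y -> W x < W y) /\
  (exists th0, forall th, th0 < th ->
      psi th <> q /\
      improper_int_eq (fun x => exp (- th * x) * W x) 0 (/ (psi th - q))).

Definition psiX (psiY : R -> R) (delta : R) : R -> R :=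
  fun th => psiY th + delta * th.

Definition Zq (q : R) (W : R -> R) (x : R) : R :=
  if Rle_dec x 0 then 1 else 1 + q * Rint W 0 x.

Definition Zbarq (q : R) (W : R -> R) (x : R) : R :=
  if Rle_dec x 0 then x else Rint (Zq q W) 0 x.

Definition Rq (q : R) (W : R -> R) (dpsiX : R) (z : R) : R :=
  Zbarq q W z + dpsiX / q.

Definition rtilde (q delta : R) (WW W : R -> R) (dpsiX c z : R) : R :=
  Rq q W dpsiX z + delta * Rint (fun y => WW (z - y) * Zq q W y) c z.

(* Gamma(a,b); dpsiX stands for psi_X'(0+) *)
Definition Gam (q delta beta rho dpsiX : R) (WW W : R -> R) (a b : R) : R :=
  delta * Zq q WW a - q * rho - q * beta * rtilde q delta WW W dpsiX (b - a) b.

Definition gam (q beta : R) (W : R -> R) (a b : R) : R :=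
  / beta - Zq q W (b - a).

Definition is_min_value (f : R -> R) (lo hi m : R) : Prop :=
  (exists x, lo <= x <= hi /\ f x = m) /\
  (forall x, lo <= x <= hi -> m <= f x).

Definition Gunder (q delta beta rho dpsiX : R) (WW W : R -> R) (b : R) : R :=
  epsilon (inhabits 0)
    (is_min_value (fun a => Gam q delta beta rho dpsiX WW W a b) 0 b).

Definition aof (q delta beta rho dpsiX : R) (WW W : R -> R) (b : R) : R :=
  epsilon (inhabits 0)
    (fun a => 0 <= a <= b /\
       Gam q delta beta rho dpsiX WW W a b = Gunder q delta beta rho dpsiX WW W b).

Definition bstar (q delta beta rho dpsiX : R) (WW W : R -> R) : R :=
  if Rle_dec (Gam q delta beta rho dpsiX WW W 0 0) 0 then 0
  else epsilon (inhabits 0)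
         (fun b => 0 < b /\ Gunder q delta beta rho dpsiX WW W b = 0).

Definition astar (q delta beta rho dpsiX : R) (WW W : R -> R) : R :=
  if Rle_dec (Gam q delta beta rho dpsiX WW W 0 0) 0 then 0
  else aof q delta beta rho dpsiX WW W (bstar q delta beta rho dpsiX WW W).

Definition exactly_one3 (P Q S : Prop) : Prop :=
  (P \/ Q \/ S) /\ ~ (P /\ Q) /\ ~ (P /\ S) /\ ~ (Q /\ S).

From Stdlib Require Import Reals Lra ClassicalEpsilon.
From Coquelicot Require Import Coquelicot.
Open Scope R_scope.

(* For 0 <= a <= b, the substitution y = b - u in the convolution term of r~ and the
   identity 1 - beta Z = beta gamma turn Gamma into
     Gamma(a,b) = Gamma(0,0) - q beta Zbar(b) + delta q beta int_0^a WW(u) gamma(u,b) du,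
   where WW is the scale function of Y.  Hence d/da Gamma(a,b) = delta q beta WW(a) gamma(a,b),
   and gamma(.,b) is strictly increasing with gamma(b,b) = 1/beta - 1 > 0: the map
   a |-> Gamma(a,b) is minimised exactly at 0 if gamma(0,b) >= 0, and at the zero of gamma(.,b)
   otherwise.  For fixed a, Gamma(a,.) is strictly decreasing (Zbar' = Z >= 1 and gamma(u,.) is
   decreasing), so the minimum is strictly decreasing and below Gamma(0,0) - q beta b; it is
   locally Lipschitz because Gamma is so on bounded triangles.  The intermediate value theorem
   then yields the unique root b* when Gamma(0,0) > 0, and the three cases are read off from the
   minimiser at b*.
   All the monotonicity rests on WW, W >= 0, i.e. on WW(0), W(0) >= 0.  This is a sign version
   of the initial value theorem: the Laplace transforms 1/(psi(theta) - q) are positive for large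
   theta, since a Laplace exponent is convex and takes a positive value, hence is unbounded. *)

(** * Calculus on the real line *)

(* Coquelicot states these results in normed modules; restated on [R] they can be used by
   [apply] and [rewrite] on goals written with [Rplus], [Rmult] and [Rminus]. *)
Lemma continuous_Rplus (f g : R -> R) x :
  continuous f x -> continuous g x -> continuous (fun y => f y + g y) x.
Proof. exact (continuous_plus f g x). Qed.

Lemma continuous_Rminus (f g : R -> R) x :
  continuous f x -> continuous g x -> continuous (fun y => f y - g y) x.
Proof. exact (continuous_minus f g x). Qed.

Lemma continuous_Rmult (f g : R -> R) x :
  continuous f x -> continuous g x -> continuous (fun y => f y * g y) x.
Proof. exact (continuous_mult f g x). Qed.

Lemma continuous_exp_lin (t x : R) : continuous (fun y => exp (t * y)) x.
Proof.
  apply (ex_derive_continuous (K := R_AbsRing) (V := R_NormedModule)).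
  auto_derive. auto.
Qed.

Ltac solve_continuous :=
  repeat match goal with
  | |- forall x, continuous _ x => intro
  | H : forall y, continuous _ y |- continuous _ _ => exact (H _)
  | |- continuous (fun x => @?f x + @?g x) _ => apply (continuous_Rplus f g)
  | |- continuous (fun x => @?f x - @?g x) _ => apply (continuous_Rminus f g)
  | |- continuous (fun x => @?f x * @?g x) _ => apply (continuous_Rmult f g)
  | |- continuous (fun x => exp (?t * x)) _ => apply continuous_exp_lin
  | |- continuous (fun x => x) _ => apply continuous_id
  | |- continuous (fun _ => ?c) _ => apply continuous_const
  end.

(* [ext0 f] extends [f] from [0, oo) to the whole line by the constant [f 0], so that
   it is continuous as soon as [f] is continuous on [0, oo) and the fundamental theorem
   of calculus applies to its integrals everywhere. *)
Definition ext0 (f : R -> R) (x : R) : R := f (Rmax x 0).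

Lemma ext0_continuous (f : R -> R) : cont_on_nonneg f -> forall x, continuous (ext0 f) x.
Proof.
  intros Hf x. apply continuity_pt_filterlim.
  intros eps Heps. destruct (Hf (Rmax x 0) (Rmax_r _ _) eps Heps) as [eta [Heta Hc]].
  exists eta. split; [exact Heta|]. intros y [_ Hy]. simpl in Hy. unfold R_dist in *.
  apply Hc; [apply Rmax_r|].
  unfold Rmax; destruct (Rle_dec y 0), (Rle_dec x 0); split_Rabs; lra.
Qed.

Lemma ext0_eq (f : R -> R) x : 0 <= x -> ext0 f x = f x.
Proof. intro Hx. unfold ext0. rewrite Rmax_left by exact Hx. reflexivity. Qed.

Lemma ex_RInt_continuous_R (f : R -> R) a b : (forall x, continuous f x) -> ex_RInt f a b.
Proof. intro Hf. apply (ex_RInt_continuous (V := R_CompleteNormedModule)). auto. Qed.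

Lemma Rint_RInt (f : R -> R) a b : ex_RInt f a b -> Rint f a b = RInt f a b.
Proof.
  intro H. unfold Rint.
  assert (Hex : exists v, exists pr : Riemann_integrable f a b, RiemannInt pr = v).
  { exists (RiemannInt (ex_RInt_Reals_0 _ _ _ H)). eexists. reflexivity. }
  destruct (epsilon_spec (inhabits 0) _ Hex) as [pr <-].
  symmetry. apply RInt_Reals.
Qed.

Lemma RInt_ext_R (f g : R -> R) a b :
  (forall x, Rmin a b < x < Rmax a b -> f x = g x) -> RInt f a b = RInt g a b.
Proof. exact (RInt_ext f g a b). Qed.

Lemma Rint_eq_RInt (f g : R -> R) a b :
  a <= b -> (forall x, continuous g x) -> (forall x, a < x < b -> f x = g x) ->
  Rint f a b = RInt g a b.
Proof.
  intros Hab Hg E.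
  assert (E' : forall x, Rmin a b < x < Rmax a b -> g x = f x).
  { rewrite Rmin_left, Rmax_right by exact Hab. intros x Hx. symmetry. auto. }
  rewrite Rint_RInt.
  - symmetry. apply RInt_ext_R. exact E'.
  - apply (ex_RInt_ext g); [exact E'|]. apply ex_RInt_continuous_R. exact Hg.
Qed.

Lemma derivable_pt_lim_RInt (f : R -> R) a x :
  (forall y, continuous f y) -> derivable_pt_lim (fun y => RInt f a y) x (f x).
Proof.
  intro Hf. apply is_derive_Reals. apply (is_derive_RInt f _ a); [|apply Hf].
  apply filter_forall. intro y. apply (RInt_correct (V := R_CompleteNormedModule)).
  apply ex_RInt_continuous_R. exact Hf.
Qed.

Lemma RInt_point_R (f : R -> R) a : RInt f a a = 0.
Proof. exact (RInt_point a f). Qed.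

Lemma RInt_Chasles_R (f : R -> R) a b c :
  (forall x, continuous f x) -> RInt f a b + RInt f b c = RInt f a c.
Proof.
  intro Hf. exact (RInt_Chasles f a b c (ex_RInt_continuous_R f a b Hf) (ex_RInt_continuous_R f b c Hf)).
Qed.

Lemma RInt_scal_R (f : R -> R) (c : R) a b :
  (forall x, continuous f x) -> RInt (fun x => c * f x) a b = c * RInt f a b.
Proof. intro Hf. exact (RInt_scal f a b c (ex_RInt_continuous_R f a b Hf)). Qed.

Lemma RInt_minus_R (f g : R -> R) a b :
  (forall x, continuous f x) -> (forall x, continuous g x) ->
  RInt (fun x => f x - g x) a b = RInt f a b - RInt g a b.
Proof.
  intros Hf Hg.
  exact (RInt_minus f g a b (ex_RInt_continuous_R f a b Hf) (ex_RInt_continuous_R g a b Hg)).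
Qed.

Lemma RInt_le_R (f g : R -> R) a b :
  a <= b -> (forall x, continuous f x) -> (forall x, continuous g x) ->
  (forall x, a < x < b -> f x <= g x) -> RInt f a b <= RInt g a b.
Proof.
  intros Hab Hf Hg. apply RInt_le; [exact Hab| |]; apply ex_RInt_continuous_R; assumption.
Qed.

Lemma RInt_exp_neg t a b :
  0 < t -> RInt (fun x => exp (- t * x)) a b = (exp (- t * a) - exp (- t * b)) / t.
Proof.
  intro Ht.
  assert (Hd : forall x, Rmin a b <= x <= Rmax a b ->
            is_derive (fun x => - exp (- t * x) / t) x (exp (- t * x))).
  { intros x _. auto_derive; [exact I | field; lra]. }
  rewrite (is_RInt_unique _ a b _ (is_RInt_derive (V := R_CompleteNormedModule) _ _ a b Hd
             (fun x _ => continuous_exp_lin (- t) x))).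
  change (- exp (- t * b) / t - - exp (- t * a) / t = (exp (- t * a) - exp (- t * b)) / t).
  field. lra.
Qed.

Lemma RInt_reflect (f : R -> R) a b :
  (forall x, continuous f x) -> RInt f (b - a) b = RInt (fun u => f (b - u)) 0 a.
Proof.
  intro Hf.
  assert (E := RInt_comp_lin f (-1) b 0 a (ex_RInt_continuous_R f _ _ Hf)).
  replace (-1 * 0 + b) with b in E by ring. replace (-1 * a + b) with (b - a) in E by ring.
  rewrite <- (opp_RInt_swap f _ _ (ex_RInt_continuous_R f _ _ Hf)), <- E.
  change (- RInt (fun y => -1 * f (-1 * y + b)) 0 a = RInt (fun u => f (b - u)) 0 a).
  rewrite RInt_scal_R.
  - replace (RInt (fun y => f (-1 * y + b)) 0 a) with (RInt (fun u => f (b - u)) 0 a)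
      by (apply RInt_ext_R; intros x _; f_equal; ring).
    ring.
  - intro x. apply (continuous_comp (fun y => -1 * y + b) f); [solve_continuous | apply Hf].
Qed.

Lemma exp_le x y : x <= y -> exp x <= exp y.
Proof. intros [H | ->]; [left; apply exp_increasing; exact H | lra]. Qed.

Lemma increment_lower_bound (f f' : R -> R) a b m :
  a <= b -> (forall x, a <= x <= b -> derivable_pt_lim f x (f' x)) ->
  (forall x, a < x < b -> m <= f' x) -> m * (b - a) <= f b - f a.
Proof.
  intros [Hab | <-] Hd Hm; [|lra].
  destruct (MVT_cor2 f f' a b Hab Hd) as [c [-> Hc]].
  apply Rmult_le_compat_r; [lra | apply Hm; exact Hc].
Qed.

Lemma increment_lower_bound_strict (f f' : R -> R) a b m :
  a < b -> (forall x, a <= x <= b -> derivable_pt_lim f x (f' x)) ->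
  (forall x, a < x < b -> m < f' x) -> m * (b - a) < f b - f a.
Proof.
  intros Hab Hd Hm.
  destruct (MVT_cor2 f f' a b Hab Hd) as [c [-> Hc]].
  apply Rmult_lt_compat_r; [lra | apply Hm; exact Hc].
Qed.

Lemma derivative_bound_lipschitz (f f' : R -> R) lo hi M :
  (forall x, lo <= x <= hi -> derivable_pt_lim f x (f' x)) ->
  (forall x, lo <= x <= hi -> Rabs (f' x) <= M) ->
  forall x y, lo <= x <= hi -> lo <= y <= hi -> Rabs (f x - f y) <= M * Rabs (x - y).
Proof.
  intros Hd HM x y Hx Hy.
  assert (Hin : forall c, Rmin y x <= c <= Rmax y x -> lo <= c <= hi).
  { intros c Hc. split.
    - apply Rle_trans with (Rmin y x); [apply Rmin_glb|]; lra.
    - apply Rle_trans with (Rmax y x); [|apply Rmax_lub]; lra. }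
  destruct (MVT_abs f f' y x (fun c Hc => Hd c (Hin c Hc))) as [c [-> Hc]].
  apply Rmult_le_compat_r; [apply Rabs_pos | apply HM, Hin, Hc].
Qed.

Lemma strict_min_of_derivative_sign (f f' : R -> R) lo m hi :
  lo <= m <= hi -> (forall x, lo <= x <= hi -> derivable_pt_lim f x (f' x)) ->
  (forall x, lo < x < m -> f' x < 0) -> (forall x, m < x < hi -> 0 < f' x) ->
  forall a, lo <= a <= hi -> a <> m -> f m < f a.
Proof.
  intros Hm Hd Hneg Hpos a Ha Hne.
  destruct (Rtotal_order a m) as [Hlt | [Heq | Hgt]]; [| contradiction |].
  - destruct (MVT_cor2 f f' a m Hlt (fun c Hc => Hd c ltac:(lra))) as [c [E Hc]].
    assert (f' c < 0) by (apply Hneg; lra). nra.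
  - destruct (MVT_cor2 f f' m a Hgt (fun c Hc => Hd c ltac:(lra))) as [c [E Hc]].
    assert (0 < f' c) by (apply Hpos; lra). nra.
Qed.

Lemma locally_lipschitz_cont_on_nonneg (f : R -> R) :
  (forall L, 0 <= L -> exists K, 0 <= K /\ forall s t, 0 <= s <= L -> 0 <= t <= L ->
     Rabs (f s - f t) <= K * Rabs (s - t)) ->
  cont_on_nonneg f.
Proof.
  intros Hlip x Hx eps Heps.
  destruct (Hlip (x + 1) ltac:(lra)) as [K [HK HKl]].
  assert (Hd : 0 < eps / (K + 1)) by (apply Rdiv_lt_0_compat; lra).
  exists (Rmin 1 (eps / (K + 1))). split; [apply Rmin_pos; lra|].
  intros y Hy Hyx.
  assert (H1 := Rmin_l 1 (eps / (K + 1))). assert (H2 := Rmin_r 1 (eps / (K + 1))).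
  apply Rle_lt_trans with (K * Rabs (y - x)); [apply HKl; split_Rabs; lra|].
  apply Rle_lt_trans with (K * (eps / (K + 1))); [apply Rmult_le_compat_l; lra|].
  replace eps with ((K + 1) * (eps / (K + 1))) at 2 by (field; lra).
  apply Rmult_lt_compat_r; lra.
Qed.

Lemma decreasing_unique_root (f : R -> R) B :
  cont_on_nonneg f -> (forall s t, 0 <= s -> s < t -> f t < f s) ->
  0 < f 0 -> 0 < B -> f B < 0 ->
  exists b, (0 < b /\ f b = 0) /\ forall b', 0 < b' -> f b' = 0 -> b' = b.
Proof.
  intros Hc Hdec H0 HB HfB.
  assert (Hg : continuity (fun x => 0 - ext0 f x)).
  { intro x. apply continuity_pt_filterlim.
    apply (continuous_Rminus (fun _ => 0) (ext0 f)); [apply continuous_const | apply ext0_continuous, Hc]. }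
  destruct (IVT _ 0 B Hg HB) as [b [Hb Eb]];
    rewrite ?ext0_eq in * by lra; try lra.
  exists b. split; [split; [destruct (Req_dec b 0) as [->|]; lra | lra]|].
  intros b' Hb' E'. destruct (Rtotal_order b' b) as [Hlt | [Heq | Hgt]]; [| exact Heq |].
  - assert (f b < f b') by (apply Hdec; lra). lra.
  - assert (f b' < f b) by (apply Hdec; lra). lra.
Qed.

Lemma strict_min_is_min_value (f : R -> R) lo hi m :
  lo <= m <= hi -> (forall a, lo <= a <= hi -> a <> m -> f m < f a) ->
  is_min_value f lo hi (f m).
Proof.
  intros Hm Hmin. split; [exists m; split; [exact Hm | reflexivity]|].
  intros x Hx. destruct (Req_dec x m) as [-> | Hne]; [lra | left; apply Hmin; assumption].
Qed.

Lemma is_min_value_ext (f g : R -> R) lo hi m :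
  (forall x, lo <= x <= hi -> f x = g x) -> is_min_value f lo hi m -> is_min_value g lo hi m.
Proof.
  intros E [[x [Hx Ex]] Hmin]. split.
  - exists x. split; [exact Hx | rewrite <- E; assumption].
  - intros y Hy. rewrite <- E by exact Hy. apply Hmin, Hy.
Qed.

Lemma is_min_value_unique (f : R -> R) lo hi m1 m2 :
  is_min_value f lo hi m1 -> is_min_value f lo hi m2 -> m1 = m2.
Proof.
  intros [[x1 [Hx1 <-]] H1] [[x2 [Hx2 <-]] H2].
  apply Rle_antisym; [apply H1 | apply H2]; assumption.
Qed.

Section MinValue.

Variables (F : R -> R -> R) (V : R -> R).
Hypothesis HV : forall b, 0 <= b -> is_min_value (fun a => F a b) 0 b (V b).

Lemma min_value_lt :
  (forall a b1 b2, 0 <= a <= b1 -> b1 < b2 -> F a b2 < F a b1) ->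
  forall b1 b2, 0 <= b1 -> b1 < b2 -> V b2 < V b1.
Proof.
  intros Hdec b1 b2 Hb1 Hb12.
  destruct (HV b1 Hb1) as [[m [Hm <-]] _].
  apply Rle_lt_trans with (F m b2); [apply (HV b2); lra | apply Hdec; lra].
Qed.

Lemma min_value_lipschitz L Ka Kb :
  0 <= Ka ->
  (forall a a' b, 0 <= a <= b -> 0 <= a' <= b -> b <= L ->
     Rabs (F a b - F a' b) <= Ka * Rabs (a - a')) ->
  (forall a b b', 0 <= a <= b -> a <= b' -> b <= L -> b' <= L ->
     Rabs (F a b - F a b') <= Kb * Rabs (b - b')) ->
  forall s t, 0 <= s <= L -> 0 <= t <= L -> Rabs (V s - V t) <= (Ka + Kb) * Rabs (s - t).
Proof.
  intros HKa Hla Hlb.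
  assert (Half : forall s t, 0 <= s <= L -> 0 <= t <= L -> V s <= V t + (Ka + Kb) * Rabs (s - t)).
  { intros s t Hs Ht.
    destruct (HV t ltac:(lra)) as [[m [Hm <-]] _].
    (* compare with the minimiser for [t], clipped to [0, s] *)
    set (a := Rmin m s).
    assert (Ha : 0 <= a <= s /\ a <= m) by (unfold a, Rmin; destruct Rle_dec; lra).
    assert (Hd : Rabs (a - m) <= Rabs (s - t))
      by (unfold a, Rmin; destruct Rle_dec; split_Rabs; lra).
    assert (H1 : V s <= F a s) by (apply (HV s); lra).
    assert (H2 := Hlb a s t ltac:(lra) ltac:(lra) ltac:(lra) ltac:(lra)).
    assert (H3 := Hla a m t ltac:(lra) ltac:(lra) ltac:(lra)).
    assert (Ka * Rabs (a - m) <= Ka * Rabs (s - t)) by (apply Rmult_le_compat_l; assumption).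
    revert H2 H3. split_Rabs; lra. }
  intros s t Hs Ht.
  assert (A1 := Half s t Hs Ht). assert (A2 := Half t s Ht Hs).
  rewrite Rabs_minus_sym in A2. apply Rabs_le. lra.
Qed.

End MinValue.

(** * Laplace transforms and scale functions *)

Lemma exp_ge_sq x : 0 <= x -> x * x / 4 <= exp x.
Proof.
  intro Hx. replace x with (x / 2 + x / 2) at 3 by field. rewrite exp_plus.
  assert (H := exp_ineq1_le (x / 2)).
  replace (x * x / 4) with ((x / 2) * (x / 2)) by field.
  apply Rmult_le_compat; lra.
Qed.

Lemma mul_exp_neg_le e A :
  0 < e -> 0 < A -> exists T, forall th, T <= th -> th * exp (- th * e) <= A.
Proof.
  intros He HA. exists (4 / (A * (e * e))). intros th Hth.
  assert (Hee : 0 < A * (e * e)) by (apply Rmult_lt_0_compat; nra).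
  assert (HT : 0 < 4 / (A * (e * e))) by (apply Rdiv_lt_0_compat; lra).
  assert (Hexp := exp_ge_sq (th * e) ltac:(nra)).
  assert (Hth1 : 1 <= A * (e * e) * th / 4).
  { apply (Rmult_le_compat_l (A * (e * e) / 4)) in Hth; [|lra].
    replace (A * (e * e) / 4 * (4 / (A * (e * e)))) with 1 in Hth by (field; lra). lra. }
  replace (- th * e) with (- (th * e)) by ring. rewrite exp_Ropp.
  assert (HE : 0 < exp (th * e)) by apply exp_pos.
  apply (Rmult_le_reg_r (exp (th * e))); [exact HE|].
  rewrite Rmult_assoc, Rinv_l by lra. nra.
Qed.

(* Sign version of the initial value theorem: if W(0) < 0, then for large theta the partial
   Laplace integrals are eventually below W(0)/(16 theta) < 0, since the part over [0, e] is at
   most W(0)/(8 theta) while the part over [e, oo) is O(exp(-theta e)). *)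
Section InitialValue.

Variable W : R -> R.
Hypothesis HWc : cont_on_nonneg W.
Hypothesis HWmono : forall x y, 0 <= x <= y -> W x <= W y.

Let f th x := exp (- th * x) * ext0 W x.

Let f_continuous th x : continuous (f th) x.
Proof.
  apply continuous_Rmult; [apply continuous_exp_lin | apply ext0_continuous, HWc].
Qed.

Let Rint_laplace th T :
  0 <= T -> Rint (fun x => exp (- th * x) * W x) 0 T = RInt (f th) 0 T.
Proof.
  intro HT. apply Rint_eq_RInt; [exact HT | apply f_continuous |].
  intros x Hx. unfold f. rewrite ext0_eq by lra. reflexivity.
Qed.

Lemma laplace_head_le e w th :
  0 < th -> 1 <= th * e -> w < 0 -> (forall x, 0 <= x <= e -> W x <= w) ->
  RInt (f th) 0 e <= w / (4 * th).
Proof.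
  intros Hth Hthe Hw HWe.
  apply Rle_trans with (RInt (fun x => w * exp (- th * x)) 0 e).
  { apply RInt_le_R; [nra | apply f_continuous | solve_continuous |].
    intros x Hx. unfold f. rewrite ext0_eq by lra.
    rewrite Rmult_comm. apply Rmult_le_compat_r; [left; apply exp_pos | apply HWe; lra]. }
  rewrite RInt_scal_R, RInt_exp_neg by (solve_continuous || lra).
  replace (- th * 0) with 0 by ring. rewrite exp_0.
  assert (Hsmall : exp (- th * e) <= / 2).
  { apply Rle_trans with (/ exp 1); [rewrite <- exp_Ropp; apply exp_le; lra|].
    apply Rinv_le_contravar; [lra|].
    assert (H := exp_ineq1 1 ltac:(lra)). lra. }
  assert (Hpos : 0 < exp (- th * e)) by apply exp_pos.
  unfold Rdiv. rewrite Rinv_mult.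
  assert (0 < / th) by (apply Rinv_0_lt_compat; lra).
  assert (w * (1 - exp (- th * e)) <= w * / 4) by nra.
  nra.
Qed.

Lemma laplace_tail_le e t1 th T :
  W 0 < 0 -> 0 < t1 <= th -> 0 < e <= T ->
  RInt (f th) e T <= exp (- (th - t1) * e) * (RInt (f t1) e T - W 0 / t1).
Proof.
  intros HW0 Ht1 HeT.
  set (c0 := exp (- (th - t1) * e)).
  apply Rle_trans with (RInt (fun x => c0 * (f t1 x - W 0 * exp (- t1 * x))) e T).
  { apply RInt_le_R; [lra | apply f_continuous | |].
    { intro x. apply continuous_Rmult; [apply continuous_const|].
      apply continuous_Rminus; [apply f_continuous | solve_continuous]. }
    intros x Hx. unfold f. rewrite ext0_eq by lra.
    assert (Ea : exp (- th * x) = exp (- (th - t1) * x) * exp (- t1 * x))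
      by (rewrite <- exp_plus; f_equal; ring).
    assert (Hc0 : exp (- (th - t1) * x) <= c0)
      by (apply exp_le, Rmult_le_compat_neg_l; lra).
    assert (Ha : 0 < exp (- (th - t1) * x)) by apply exp_pos.
    assert (Hb : 0 < exp (- t1 * x)) by apply exp_pos.
    assert (HWx : W 0 <= W x) by (apply HWmono; lra).
    rewrite Ea.
    set (a := exp (- (th - t1) * x)) in *. set (b := exp (- t1 * x)) in *.
    assert (0 <= c0 * (b * (W x - W 0))) by (apply Rmult_le_pos; [|apply Rmult_le_pos]; lra).
    destruct (Rle_lt_dec 0 (W x)).
    - assert (0 <= (c0 - a) * (b * W x)) by (apply Rmult_le_pos; [|apply Rmult_le_pos]; lra).
      nra.
    - assert (0 < a * b) by (apply Rmult_lt_0_compat; lra).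
      nra. }
  assert (Hf1 := f_continuous t1).
  rewrite RInt_scal_R, (RInt_minus_R (f t1)), RInt_scal_R, RInt_exp_neg;
    try (lra || exact Hf1 || solve_continuous).
  assert (Hc0 : 0 < c0) by apply exp_pos.
  apply Rmult_le_compat_l; [lra|].
  assert (0 < exp (- t1 * T)) by apply exp_pos.
  assert (exp (- t1 * e) <= 1) by (rewrite <- exp_0; apply exp_le; nra).
  assert (- W 0 * ((exp (- t1 * e) - exp (- t1 * T)) / t1) <= - W 0 / t1).
  { unfold Rdiv. rewrite <- Rmult_assoc. apply Rmult_le_compat_r;
      [left; apply Rinv_0_lt_compat; lra | nra]. }
  lra.
Qed.

Lemma W_below_half_near_0 :
  W 0 < 0 -> exists e, 0 < e /\ forall x, 0 <= x <= e -> W x <= W 0 / 2.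
Proof.
  intro HW0.
  destruct (HWc 0 (Rle_refl 0) (- W 0 / 2)) as [eta [Heta Hclose]]; [lra|].
  exists (eta / 2). split; [lra|]. intros x Hx.
  apply Rle_trans with (W (eta / 2)); [apply HWmono; lra|].
  assert (H : Rabs (W (eta / 2) - W 0) < - W 0 / 2)
    by (apply Hclose; [lra | rewrite Rminus_0_r, Rabs_pos_eq; lra]).
  apply Rabs_def2 in H. lra.
Qed.

Lemma laplace_tail_bounded e t1 v1 :
  W 0 < 0 -> 0 < t1 -> 0 < e ->
  improper_int_eq (fun x => exp (- t1 * x) * W x) 0 v1 ->
  exists K M1, 0 < K /\ forall T, M1 <= T -> e <= T -> RInt (f t1) e T - W 0 / t1 <= K.
Proof.
  intros HW0 Ht1 He [_ Hconv].
  destruct (Hconv 1 ltac:(lra)) as [M1 HM1].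
  assert (HW0t : 0 < - W 0 / t1) by (apply Rdiv_lt_0_compat; lra).
  exists (Rabs v1 + 1 + Rabs (RInt (f t1) 0 e) - W 0 / t1), M1.
  split; [assert (0 <= Rabs v1) by apply Rabs_pos;
          assert (0 <= Rabs (RInt (f t1) 0 e)) by apply Rabs_pos; lra|].
  intros T HT HeT.
  assert (H := HM1 T HT ltac:(lra)). rewrite Rint_laplace in H by lra.
  rewrite <- (RInt_Chasles_R (f t1) 0 e T) in H by apply f_continuous.
  apply Rabs_def2 in H.
  assert (v1 <= Rabs v1) by apply RRle_abs.
  assert (- RInt (f t1) 0 e <= Rabs (RInt (f t1) 0 e))
    by (rewrite <- Rabs_Ropp; apply RRle_abs).
  lra.
Qed.

Lemma laplace_partial_integral_neg t1 v1 :
  W 0 < 0 -> 0 < t1 -> improper_int_eq (fun x => exp (- t1 * x) * W x) 0 v1 ->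
  exists Th, forall th, Th <= th ->
    exists M, forall T, M <= T -> RInt (f th) 0 T <= W 0 / (16 * th).
Proof.
  intros HW0 Ht1 Hv1.
  destruct (W_below_half_near_0 HW0) as [e [He HWe]].
  destruct (laplace_tail_bounded e t1 v1 HW0 Ht1 He Hv1) as [K [M1 [HK HtailK]]].
  set (E := exp (t1 * e)).
  assert (HE : 0 < E) by apply exp_pos.
  assert (HA : 0 < - W 0 / (16 * E * K)) by (apply Rdiv_lt_0_compat; [lra | nra]).
  destruct (mul_exp_neg_le e _ He HA) as [Th HTh].
  exists (Rmax (Rmax t1 Th) (/ e)). intros th Hth.
  assert (Hth' : t1 <= th /\ Th <= th /\ / e <= th)
    by (revert Hth; unfold Rmax; repeat destruct Rle_dec; lra).
  assert (Hthe : 1 <= th * e).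
  { replace 1 with (/ e * e) by (field; lra). apply Rmult_le_compat_r; lra. }
  exists (Rmax M1 e). intros T HT.
  assert (HT' : M1 <= T /\ e <= T) by (revert HT; unfold Rmax; destruct Rle_dec; lra).
  assert (Hhead : RInt (f th) 0 e <= W 0 / 2 / (4 * th)) by (apply laplace_head_le; lra || exact HWe).
  assert (Htail : RInt (f th) e T <= - W 0 / (16 * th)).
  { apply Rle_trans with (exp (- (th - t1) * e) * K).
    - apply Rle_trans with (1 := laplace_tail_le e t1 th T HW0 ltac:(lra) ltac:(lra)).
      apply Rmult_le_compat_l; [left; apply exp_pos | apply HtailK; lra].
    - replace (- (th - t1) * e) with (t1 * e + - th * e) by ring. rewrite exp_plus.
      fold E. assert (H := HTh th ltac:(lra)).
      apply (Rmult_le_reg_l (16 * th)); [lra|].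
      replace (16 * th * (- W 0 / (16 * th))) with (- W 0) by (field; lra).
      replace (- W 0) with (16 * E * K * (- W 0 / (16 * E * K))) by (field; nra).
      assert (0 < 16 * E * K) by nra. nra. }
  rewrite <- (RInt_Chasles_R (f th) 0 e T) by apply f_continuous.
  replace (W 0 / 2 / (4 * th)) with (2 * (W 0 / (16 * th))) in Hhead by (field; lra).
  lra.
Qed.

Theorem laplace_nonneg_initial_value :
  (exists th0, forall th, th0 < th ->
     exists v, 0 <= v /\ improper_int_eq (fun x => exp (- th * x) * W x) 0 v) ->
  0 <= W 0.
Proof.
  intros [th0 HL]. apply Rnot_lt_le. intro HW0.
  set (t1 := Rmax th0 0 + 1).
  assert (Ht1 : th0 < t1 /\ 0 < t1) by (unfold t1, Rmax; destruct Rle_dec; lra).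
  destruct (HL t1 ltac:(lra)) as [v1 [_ Hv1]].
  destruct (laplace_partial_integral_neg t1 v1 HW0 ltac:(lra) Hv1) as [Th HTh].
  set (th := Rmax Th t1).
  assert (Hth : Th <= th /\ t1 <= th) by (unfold th, Rmax; destruct Rle_dec; lra).
  destruct (HL th ltac:(lra)) as [v [Hv [_ Hconv]]].
  destruct (HTh th ltac:(lra)) as [M1 HM1].
  assert (Heps : 0 < - W 0 / (16 * th)) by (apply Rdiv_lt_0_compat; lra).
  destruct (Hconv _ Heps) as [M HM].
  set (T := Rmax (Rmax M M1) 0).
  assert (HT : M <= T /\ M1 <= T /\ 0 <= T) by (unfold T, Rmax; repeat destruct Rle_dec; lra).
  assert (H := HM T ltac:(lra) ltac:(lra)). rewrite Rint_laplace in H by lra.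
  assert (H1 := HM1 T ltac:(lra)).
  apply Rabs_def2 in H. lra.
Qed.

End InitialValue.

Lemma spos_levy_exponent_unbounded psi d :
  spos_levy_exponent psi d -> forall M, exists th1, forall th, th1 <= th -> M < psi th.
Proof.
  intros [_ [Hsmall [[D [HD0 [HDd [HD2 _]]]] [th [Hth Hpos]]]]] M.
  destruct (Hsmall (psi th / 2)) as [eta [Heta Heta']]; [lra|].
  set (t := Rmin (eta / 2) (th / 2)).
  assert (Ht : 0 < t < th /\ t < eta) by (unfold t, Rmin; destruct Rle_dec; lra).
  assert (Hpt := Heta' t ltac:(lra)).
  destruct (MVT_cor2 (D 0%nat) (D 1%nat) t th ltac:(lra) (fun c _ => HDd 0%nat c ltac:(lra)))
    as [xi [Exi Hxi]].
  rewrite !HD0 in Exi by lra.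
  set (s := D 1%nat xi) in *.
  assert (Hs : 0 < s) by (apply Rabs_def2 in Hpt; nra).
  assert (Hconvex : forall x, xi <= x -> s <= D 1%nat x).
  { intros x Hx.
    assert (0 * (x - xi) <= D 1%nat x - s).
    { apply (increment_lower_bound (D 1%nat) (D 2%nat)); [lra | intros; apply HDd; lra |].
      intros y Hy. assert (H := HD2 0%nat y ltac:(lra)). simpl in H. lra. }
    lra. }
  assert (Hgrowth : forall x, th <= x -> s * (x - th) <= psi x - psi th).
  { intros x Hx. rewrite <- (HD0 x), <- (HD0 th) by lra.
    apply (increment_lower_bound (D 0%nat) (D 1%nat)); [lra | intros; apply HDd; lra |].
    intros y Hy. apply Hconvex. lra. }
  exists (th + Rabs M / s + 1). intros th' Hth'.
  assert (Hsq : s * (Rabs M / s) = Rabs M) by (field; lra).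
  assert (H := Hgrowth th' ltac:(assert (0 <= Rabs M / s) by
                 (apply Rdiv_le_0_compat; [apply Rabs_pos | lra]); lra)).
  assert (M <= Rabs M) by apply RRle_abs.
  nra.
Qed.

Lemma psiX_unbounded psi delta :
  0 <= delta -> (forall M, exists th1, forall th, th1 <= th -> M < psi th) ->
  forall M, exists th1, forall th, th1 <= th -> M < psiX psi delta th.
Proof.
  intros Hdelta Hpsi M. destruct (Hpsi M) as [th1 Hth1]. exists (Rmax th1 0). intros th Hth.
  assert (H := Hth1 th (Rle_trans _ _ _ (Rmax_l _ _) Hth)).
  assert (0 <= delta * th) by (apply Rmult_le_pos; [lra | apply (Rle_trans _ _ _ (Rmax_r _ _) Hth)]).
  unfold psiX. lra.
Qed.

Lemma scale_function_nonneg_at_0 psi q W :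
  is_scale_function psi q W -> (forall M, exists th1, forall th, th1 <= th -> M < psi th) ->
  0 <= W 0.
Proof.
  intros [_ [Hc [Hinc [th0 HL]]]] Hpsi.
  destruct (Hpsi q) as [th1 Hth1].
  apply (laplace_nonneg_initial_value W Hc).
  - intros x y [Hx [Hxy | <-]]; [left; apply Hinc | right]; lra.
  - exists (Rmax th0 th1). intros th Hth.
    destruct (HL th ltac:(unfold Rmax in Hth; destruct Rle_dec; lra)) as [_ Hint].
    exists (/ (psi th - q)). split; [|exact Hint].
    assert (q < psi th) by (apply Hth1; unfold Rmax in Hth; destruct Rle_dec; lra).
    left. apply Rinv_0_lt_compat. lra.
Qed.

(** * The functions Z and Gamma *)

Definition Zc (q : R) (W : R -> R) (x : R) : R := 1 + q * RInt (ext0 W) 0 x.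

Definition Zbarc (q : R) (W : R -> R) (b : R) : R := RInt (Zc q W) 0 b.

Section ScaleFunction.

Variables (q : R) (W : R -> R).
Hypothesis Hq : 0 < q.
Hypothesis HWc : cont_on_nonneg W.
Hypothesis HWinc : forall x y, 0 <= x -> x < y -> W x < W y.
Hypothesis HW0 : 0 <= W 0.

Lemma W_le x y : 0 <= x -> x <= y -> W x <= W y.
Proof. intros Hx [Hxy | <-]; [left; apply HWinc | right]; lra. Qed.

Lemma W_nonneg x : 0 <= x -> 0 <= W x.
Proof. intro Hx. apply Rle_trans with (W 0); [exact HW0 | apply W_le; lra]. Qed.

Lemma ext0_le x y : x <= y -> ext0 W x <= ext0 W y.
Proof.
  intro Hxy. apply W_le; [apply Rmax_r|]. unfold Rmax. repeat destruct Rle_dec; lra.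
Qed.

Lemma ext0_nonneg x : 0 <= ext0 W x.
Proof. apply W_nonneg, Rmax_r. Qed.

Lemma ext0_pos x : 0 < x -> 0 < ext0 W x.
Proof.
  intro Hx. rewrite ext0_eq by lra.
  apply Rle_lt_trans with (W 0); [exact HW0 | apply HWinc; lra].
Qed.

Lemma Zc_derivable x : derivable_pt_lim (Zc q W) x (q * ext0 W x).
Proof.
  replace (q * ext0 W x) with (0 + q * ext0 W x) by ring.
  apply (derivable_pt_lim_plus (fct_cte 1) (mult_real_fct q (fun y => RInt (ext0 W) 0 y))).
  - apply derivable_pt_lim_const.
  - apply derivable_pt_lim_scal, derivable_pt_lim_RInt, ext0_continuous, HWc.
Qed.

Lemma Zc_continuous x : continuous (Zc q W) x.
Proof.
  apply (ex_derive_continuous (K := R_AbsRing) (V := R_NormedModule)).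
  exists (q * ext0 W x). apply is_derive_Reals, Zc_derivable.
Qed.

Lemma Zc_0 : Zc q W 0 = 1.
Proof. unfold Zc. rewrite RInt_point_R. ring. Qed.

Lemma Zc_le x y : x <= y -> Zc q W x <= Zc q W y.
Proof.
  intro Hxy.
  assert (H : 0 * (y - x) <= Zc q W y - Zc q W x).
  { apply (increment_lower_bound _ (fun x => q * ext0 W x)); [lra | intros; apply Zc_derivable |].
    intros z _. apply Rmult_le_pos; [lra | apply ext0_nonneg]. }
  lra.
Qed.

Lemma Zc_lt x y : 0 <= x -> x < y -> Zc q W x < Zc q W y.
Proof.
  intros Hx Hxy.
  assert (H : 0 * (y - x) < Zc q W y - Zc q W x).
  { apply (increment_lower_bound_strict _ (fun x => q * ext0 W x)); [lra | intros; apply Zc_derivable |].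
    intros z Hz. apply Rmult_lt_0_compat; [lra | apply ext0_pos; lra]. }
  lra.
Qed.

Lemma Zc_ge_1 x : 0 <= x -> 1 <= Zc q W x.
Proof. intro Hx. rewrite <- Zc_0. apply Zc_le. exact Hx. Qed.

Lemma Zq_eq_Zc x : 0 <= x -> Zq q W x = Zc q W x.
Proof.
  intro Hx. unfold Zq. destruct (Rle_dec x 0) as [Hle | Hgt].
  - replace x with 0 by lra. rewrite Zc_0. reflexivity.
  - unfold Zc. rewrite (Rint_eq_RInt W (ext0 W)); [reflexivity | exact Hx | apply ext0_continuous, HWc |].
    intros y Hy. symmetry. apply ext0_eq. lra.
Qed.

Lemma Zbarc_derivable x : derivable_pt_lim (Zbarc q W) x (Zc q W x).
Proof. apply derivable_pt_lim_RInt, Zc_continuous. Qed.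

Lemma Zbarq_eq_Zbarc x : 0 <= x -> Zbarq q W x = Zbarc q W x.
Proof.
  intro Hx. unfold Zbarq, Zbarc. destruct (Rle_dec x 0) as [Hle | Hgt].
  - replace x with 0 by lra. rewrite RInt_point_R. reflexivity.
  - apply Rint_eq_RInt; [exact Hx | apply Zc_continuous |].
    intros y Hy. apply Zq_eq_Zc. lra.
Qed.

Lemma Zbarc_slope b1 b2 : 0 <= b1 <= b2 -> b2 - b1 <= Zbarc q W b2 - Zbarc q W b1.
Proof.
  intro Hb. rewrite <- (Rmult_1_l (b2 - b1)).
  apply (increment_lower_bound _ (Zc q W)); [lra | intros; apply Zbarc_derivable |].
  intros z Hz. apply Zc_ge_1. lra.
Qed.

Lemma Zc_lipschitz L s t :
  0 <= s <= L -> 0 <= t <= L -> Rabs (Zc q W s - Zc q W t) <= q * W L * Rabs (s - t).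
Proof.
  intros Hs Ht.
  apply (derivative_bound_lipschitz _ (fun x => q * ext0 W x) 0 L); auto.
  - intros; apply Zc_derivable.
  - intros x Hx. rewrite Rabs_pos_eq by (apply Rmult_le_pos; [lra | apply ext0_nonneg]).
    apply Rmult_le_compat_l; [lra|].
    rewrite <- (ext0_eq W L) by lra. apply ext0_le. lra.
Qed.

Lemma Zbarc_lipschitz L s t :
  0 <= s <= L -> 0 <= t <= L -> Rabs (Zbarc q W s - Zbarc q W t) <= Zc q W L * Rabs (s - t).
Proof.
  intros Hs Ht.
  apply (derivative_bound_lipschitz _ (Zc q W) 0 L); auto.
  - intros; apply Zbarc_derivable.
  - intros x Hx. assert (1 <= Zc q W x) by (apply Zc_ge_1; lra).
    rewrite Rabs_pos_eq by lra. apply Zc_le. lra.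
Qed.

End ScaleFunction.

Lemma exactly_one3_intro (P Q S : Prop) :
  (P -> ~ Q) -> (P -> ~ S) -> (Q -> ~ S) -> P \/ Q \/ S -> exactly_one3 P Q S.
Proof. unfold exactly_one3. tauto. Qed.

Definition gamc (q beta : R) (W : R -> R) (a b : R) : R := / beta - Zc q W (b - a).

(* Gamma(a, b) in the form of the header, with [C] standing for Gamma(0,0)
   (see [Gam_eq_Gammac]). *)
Definition Gammac (q delta beta C : R) (WW W : R -> R) (a b : R) : R :=
  C - q * beta * Zbarc q W b
  + delta * q * beta * RInt (fun u => ext0 WW u * gamc q beta W u b) 0 a.

Section Gamma.

Variables (q delta beta rho dpsiX C : R) (WW W : R -> R).
Hypothesis HC : C = delta - q * rho - beta * dpsiX.
Hypothesis Hq : 0 < q.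
Hypothesis Hdelta : 0 < delta.
Hypothesis Hbeta : 0 < beta < 1.
Hypothesis HWWc : cont_on_nonneg WW.
Hypothesis HWWinc : forall x y, 0 <= x -> x < y -> WW x < WW y.
Hypothesis HWW0 : 0 <= WW 0.
Hypothesis HWc : cont_on_nonneg W.
Hypothesis HWinc : forall x y, 0 <= x -> x < y -> W x < W y.
Hypothesis HW0 : 0 <= W 0.

Local Notation g := (gamc q beta W).
Local Notation Gc := (Gammac q delta beta C WW W).
Local Notation G := (Gam q delta beta rho dpsiX WW W).
Local Notation Gu := (Gunder q delta beta rho dpsiX WW W).

Lemma gam_eq_gamc a b : 0 <= a <= b -> gam q beta W a b = g a b.
Proof. intro Hab. unfold gam, gamc. rewrite Zq_eq_Zc; auto; lra. Qed.

Lemma convolution_eq a b :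
  0 <= a <= b ->
  Rint (fun y => WW (b - y) * Zq q W y) (b - a) b = RInt (fun u => ext0 WW u * Zc q W (b - u)) 0 a.
Proof.
  intro Hab.
  assert (Hc : forall x, continuous (fun y => ext0 WW (b - y) * Zc q W y) x).
  { intro x. apply continuous_Rmult; [|apply Zc_continuous; auto].
    apply (continuous_comp (fun y => b - y) (ext0 WW)); [solve_continuous | apply ext0_continuous; auto]. }
  rewrite (Rint_eq_RInt _ (fun y => ext0 WW (b - y) * Zc q W y)); [| lra | exact Hc |].
  - rewrite RInt_reflect by exact Hc.
    apply RInt_ext_R. intros u _. do 2 f_equal. ring.
  - intros y Hy. rewrite ext0_eq, Zq_eq_Zc; auto; lra.
Qed.

Lemma Gam_eq_Gammac a b : 0 <= a <= b -> G a b = Gc a b.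
Proof.
  intro Hab. unfold Gam, rtilde, Rq, Gammac.
  rewrite Zq_eq_Zc, Zbarq_eq_Zbarc, convolution_eq; auto; try lra.
  replace (b - (b - a)) with a by ring.
  assert (Hk : forall x, continuous (fun u => ext0 WW u * Zc q W (b - u)) x).
  { intro x. apply continuous_Rmult; [apply ext0_continuous; auto|].
    apply (continuous_comp (fun u => b - u) (Zc q W)); [solve_continuous | apply Zc_continuous; auto]. }
  assert (E : RInt (fun u => ext0 WW u * g u b) 0 a
              = / beta * RInt (ext0 WW) 0 a - RInt (fun u => ext0 WW u * Zc q W (b - u)) 0 a).
  { transitivity (RInt (fun u => / beta * ext0 WW u - ext0 WW u * Zc q W (b - u)) 0 a).
    - apply RInt_ext_R. intros u _. unfold gamc. ring.
    - assert (HW' := ext0_continuous WW HWWc).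
      rewrite RInt_minus_R, RInt_scal_R; solve_continuous; reflexivity. }
  rewrite E, HC. unfold Zc. field. lra.
Qed.

Lemma gamc_lt a1 a2 b : 0 <= a1 -> a1 < a2 -> a2 <= b -> g a1 b < g a2 b.
Proof.
  intros Ha1 Ha12 Ha2. unfold gamc.
  assert (Zc q W (b - a2) < Zc q W (b - a1)) by (apply Zc_lt; auto; lra). lra.
Qed.

Lemma gamc_diag_pos b : 0 < g b b.
Proof.
  unfold gamc. rewrite Rminus_diag, Zc_0.
  assert (1 < / beta) by (rewrite <- Rinv_1; apply Rinv_lt_contravar; lra). lra.
Qed.

Lemma gamc_continuous b x : continuous (fun u => g u b) x.
Proof.
  unfold gamc. apply (continuous_Rminus (fun _ => / beta)); [apply continuous_const|].
  apply (continuous_comp (fun u => b - u) (Zc q W)); [solve_continuous | apply Zc_continuous; auto].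
Qed.

Lemma gamc_kernel_continuous b x : continuous (fun u => ext0 WW u * g u b) x.
Proof.
  apply (continuous_Rmult (ext0 WW) (fun u => g u b));
    [apply ext0_continuous; exact HWWc | exact (gamc_continuous b x)].
Qed.

Lemma Gammac_derivable_a b x :
  derivable_pt_lim (fun a => Gc a b) x (delta * q * beta * (ext0 WW x * g x b)).
Proof.
  unfold Gammac. rewrite <- (Rplus_0_l (delta * q * beta * _)).
  apply (derivable_pt_lim_plus (fct_cte _)
           (mult_real_fct _ (fun a => RInt (fun u => ext0 WW u * g u b) 0 a))).
  - apply derivable_pt_lim_const.
  - apply derivable_pt_lim_scal, (derivable_pt_lim_RInt (fun u => ext0 WW u * g u b)).
    exact (gamc_kernel_continuous b).
Qed.

Lemma gamc_root b : 0 <= b -> g 0 b < 0 -> exists m, 0 < m < b /\ g m b = 0.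
Proof.
  intros Hb Hg0.
  assert (Hbb := gamc_diag_pos b).
  assert (Hb' : 0 < b) by (destruct (Req_dec b 0) as [-> |]; lra).
  assert (Hc : continuity (fun u => g u b))
    by (intro x; apply continuity_pt_filterlim, gamc_continuous).
  destruct (IVT _ 0 b Hc Hb' Hg0 Hbb) as [m [Hm Em]].
  exists m. split; [|exact Em].
  split; [destruct (Req_dec m 0) as [-> |] | destruct (Req_dec m b) as [-> |]]; lra.
Qed.

Lemma Gammac_strict_min_at m b :
  0 <= m <= b -> 0 <= g m b -> (m = 0 \/ g m b <= 0) ->
  forall a, 0 <= a <= b -> a <> m -> Gc m b < Gc a b.
Proof.
  intros Hm Hpos Hneg.
  assert (Hdqb : 0 < delta * q * beta) by (apply Rmult_lt_0_compat; [nra | lra]).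
  apply (strict_min_of_derivative_sign (fun a => Gc a b)
           (fun x => delta * q * beta * (ext0 WW x * g x b)) 0 m b Hm);
    [intros; apply Gammac_derivable_a | |].
  - intros x Hx.
    assert (g x b < 0) by (assert (g x b < g m b) by (apply gamc_lt; lra);
                           destruct Hneg as [-> | Hneg]; lra).
    assert (0 < ext0 WW x) by (apply ext0_pos; auto; lra).
    assert (ext0 WW x * g x b < 0) by nra. nra.
  - intros x Hx. apply Rmult_lt_0_compat; [exact Hdqb|].
    apply Rmult_lt_0_compat; [apply ext0_pos; auto; lra|].
    assert (g m b < g x b) by (apply gamc_lt; lra). lra.
Qed.

Lemma Gammac_strict_min b :
  0 <= b -> exists m, 0 <= m <= b /\
    (forall a, 0 <= a <= b -> a <> m -> Gc m b < Gc a b) /\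
    (m = 0 /\ 0 <= g 0 b \/ 0 < m < b /\ g m b = 0).
Proof.
  intro Hb. destruct (Rle_lt_dec 0 (g 0 b)) as [H0 | H0].
  - exists 0. repeat split; [lra | exact Hb | | left; split; [reflexivity | exact H0]].
    apply Gammac_strict_min_at; auto; lra.
  - destruct (gamc_root b Hb H0) as [m [Hm Em]].
    exists m. repeat split; [lra | lra | | right; split; [exact Hm | exact Em]].
    apply Gammac_strict_min_at; lra.
Qed.
Lemma Gammac_lt_b a b1 b2 : 0 <= a <= b1 -> b1 < b2 -> Gc a b2 < Gc a b1.
Proof.
  intros Ha Hb. unfold Gammac.
  assert (HZ : b2 - b1 <= Zbarc q W b2 - Zbarc q W b1) by (apply Zbarc_slope; auto; lra).
  assert (HI : RInt (fun u => ext0 WW u * g u b2) 0 a <= RInt (fun u => ext0 WW u * g u b1) 0 a).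
  { apply RInt_le_R; [lra | apply gamc_kernel_continuous | apply gamc_kernel_continuous |].
    intros u Hu. apply Rmult_le_compat_l; [apply ext0_nonneg; auto|].
    unfold gamc. assert (Zc q W (b1 - u) <= Zc q W (b2 - u)) by (apply Zc_le; auto; lra). lra. }
  assert (Hqb : 0 < q * beta) by nra.
  assert (0 < delta * q * beta) by nra.
  nra.
Qed.

Lemma Gammac_0_le b : 0 <= b -> Gc 0 b <= C - q * beta * b.
Proof.
  intro Hb. unfold Gammac. rewrite RInt_point_R.
  assert (HZ : b - 0 <= Zbarc q W b - Zbarc q W 0) by (apply Zbarc_slope; auto; lra).
  unfold Zbarc at 2 in HZ. rewrite RInt_point_R in HZ.
  assert (0 < q * beta) by nra. nra.
Qed.

Lemma Gammac_lipschitz_a L a a' b :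
  0 <= a <= b -> 0 <= a' <= b -> b <= L ->
  Rabs (Gc a b - Gc a' b) <= delta * q * beta * (WW L * (/ beta + Zc q W L)) * Rabs (a - a').
Proof.
  intros Ha Ha' HbL.
  apply (derivative_bound_lipschitz (fun a => Gc a b) (fun x => delta * q * beta * (ext0 WW x * g x b)) 0 b);
    [intros; apply Gammac_derivable_a | | exact Ha | exact Ha'].
  intros x Hx.
  assert (Hdqb : 0 < delta * q * beta) by (apply Rmult_lt_0_compat; [nra | lra]).
  rewrite Rabs_mult, Rabs_pos_eq by lra. apply Rmult_le_compat_l; [lra|].
  rewrite Rabs_mult. apply Rmult_le_compat; try apply Rabs_pos.
  - rewrite Rabs_pos_eq by (apply ext0_nonneg; auto).
    rewrite <- (ext0_eq WW L) by lra. apply ext0_le; auto; lra.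
  - unfold gamc.
    assert (1 <= Zc q W (b - x)) by (apply Zc_ge_1; auto; lra).
    assert (Zc q W (b - x) <= Zc q W L) by (apply Zc_le; auto; lra).
    assert (0 < / beta) by (apply Rinv_0_lt_compat; lra).
    apply Rabs_le. lra.
Qed.

Lemma gamc_kernel_integral_lipschitz L a b b' :
  0 <= a <= b -> a <= b' -> b <= L -> b' <= L ->
  Rabs (RInt (fun u => ext0 WW u * g u b) 0 a - RInt (fun u => ext0 WW u * g u b') 0 a)
    <= a * (WW L * (q * W L * Rabs (b - b'))).
Proof.
  intros Ha Hab' HbL Hb'L.
  rewrite <- RInt_minus_R by apply gamc_kernel_continuous.
  eapply Rle_trans; [apply abs_RInt_le_const with (M := WW L * (q * W L * Rabs (b - b')))
                    | right; ring];
    [lra | apply ex_RInt_continuous_R; intro x;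
           apply (continuous_Rminus (fun u => ext0 WW u * g u b) (fun u => ext0 WW u * g u b'));
           apply gamc_kernel_continuous |].
  intros u Hu. unfold gamc.
  replace (ext0 WW u * (/ beta - Zc q W (b - u)) - ext0 WW u * (/ beta - Zc q W (b' - u)))
    with (ext0 WW u * (Zc q W (b' - u) - Zc q W (b - u))) by ring.
  rewrite Rabs_mult, Rabs_pos_eq by (apply ext0_nonneg; auto).
  apply Rmult_le_compat; [apply ext0_nonneg; auto | apply Rabs_pos | |].
  - rewrite <- (ext0_eq WW L) by lra. apply ext0_le; auto; lra.
  - rewrite (Rabs_minus_sym b b'). replace (b' - b) with ((b' - u) - (b - u)) by ring.
    apply Zc_lipschitz; auto; lra.
Qed.

Lemma Gammac_lipschitz_b L a b b' :
  0 <= a <= b -> a <= b' -> b <= L -> b' <= L ->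
  Rabs (Gc a b - Gc a b') <=
    q * beta * (Zc q W L + delta * L * WW L * (q * W L)) * Rabs (b - b').
Proof.
  intros Ha Hab' HbL Hb'L.
  set (k c u := ext0 WW u * g u c).
  assert (HZ : Rabs (Zbarc q W b - Zbarc q W b') <= Zc q W L * Rabs (b - b'))
    by (apply Zbarc_lipschitz; auto; lra).
  assert (HI := gamc_kernel_integral_lipschitz L a b b' Ha Hab' HbL Hb'L). fold (k b) (k b') in HI.
  unfold Gammac. fold (k b) (k b').
  replace (C - q * beta * Zbarc q W b + delta * q * beta * RInt (k b) 0 a -
           (C - q * beta * Zbarc q W b' + delta * q * beta * RInt (k b') 0 a))
    with (q * beta * (- (Zbarc q W b - Zbarc q W b') + delta * (RInt (k b) 0 a - RInt (k b') 0 a)))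
    by ring.
  assert (Hqb : 0 < q * beta) by nra.
  rewrite Rabs_mult, Rabs_pos_eq by lra.
  rewrite (Rmult_assoc (q * beta)). apply Rmult_le_compat_l; [lra|].
  eapply Rle_trans; [apply Rabs_triang|]. rewrite Rabs_Ropp, Rabs_mult, (Rabs_pos_eq delta) by lra.
  assert (HWWL : 0 <= WW L) by (apply (W_nonneg WW); auto; lra).
  assert (HWL : 0 <= W L) by (apply (W_nonneg W); auto; lra).
  assert (0 <= WW L * (q * W L * Rabs (b - b')))
    by (assert (0 <= Rabs (b - b')) by apply Rabs_pos; repeat apply Rmult_le_pos; lra).
  assert (a * (WW L * (q * W L * Rabs (b - b'))) <= L * (WW L * (q * W L * Rabs (b - b'))))
    by (apply Rmult_le_compat_r; lra).
  nra.
Qed.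

Lemma Gam_strict_min b :
  0 <= b -> exists m, 0 <= m <= b /\
    (forall a, 0 <= a <= b -> a <> m -> G m b < G a b) /\
    (m = 0 /\ 0 <= / beta - Zq q W b \/ 0 < m < b /\ gam q beta W m b = 0).
Proof.
  intro Hb. destruct (Gammac_strict_min b Hb) as [m [Hm [Hmin Hcase]]].
  exists m. split; [exact Hm|]. split.
  - intros a Ha Hne. rewrite !Gam_eq_Gammac by lra. apply Hmin; assumption.
  - destruct Hcase as [[-> H0] | [Hm' H0]]; [left | right].
    + split; [reflexivity|]. rewrite Zq_eq_Zc by auto. unfold gamc in H0.
      rewrite Rminus_0_r in H0. exact H0.
    + split; [exact Hm'|]. rewrite gam_eq_gamc by lra. exact H0.
Qed.

Lemma Gunder_is_min b : 0 <= b -> is_min_value (fun a => G a b) 0 b (Gu b).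
Proof.
  intro Hb. destruct (Gam_strict_min b Hb) as [m [Hm [Hmin _]]].
  apply (epsilon_spec (inhabits 0) (is_min_value (fun a => G a b) 0 b)).
  exists (G m b). apply (strict_min_is_min_value (fun a => G a b)); assumption.
Qed.

Lemma Gunder_at_strict_min b m :
  0 <= m <= b -> (forall a, 0 <= a <= b -> a <> m -> G m b < G a b) -> Gu b = G m b.
Proof.
  intros Hm Hmin. apply (is_min_value_unique (fun a => G a b) 0 b).
  - apply Gunder_is_min. lra.
  - apply (strict_min_is_min_value (fun a => G a b)); assumption.
Qed.

Lemma Gunder_is_min_Gammac b : 0 <= b -> is_min_value (fun a => Gc a b) 0 b (Gu b).
Proof.
  intro Hb. apply (is_min_value_ext (fun a => G a b)); [|apply Gunder_is_min, Hb].
  intros a Ha. apply Gam_eq_Gammac. exact Ha.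
Qed.

Lemma Gunder_lt b1 b2 : 0 <= b1 -> b1 < b2 -> Gu b2 < Gu b1.
Proof.
  apply (min_value_lt Gc Gu Gunder_is_min_Gammac). intros. apply Gammac_lt_b; assumption.
Qed.

Lemma Gunder_le_linear b : 0 <= b -> Gu b <= C - q * beta * b.
Proof.
  intro Hb. apply Rle_trans with (Gc 0 b); [apply (Gunder_is_min_Gammac b Hb); lra|].
  apply Gammac_0_le. exact Hb.
Qed.

Lemma Gunder_to_neg_infty M : exists B, forall b, B <= b -> Gu b < M.
Proof.
  assert (Hqb : 0 < q * beta) by nra.
  exists (Rmax 0 ((C - M) / (q * beta)) + 1). intros b Hb.
  assert (H1 := Rmax_l 0 ((C - M) / (q * beta))). assert (H2 := Rmax_r 0 ((C - M) / (q * beta))).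
  assert (H3 := Gunder_le_linear b ltac:(lra)).
  assert (q * beta * ((C - M) / (q * beta)) < q * beta * b) by (apply Rmult_lt_compat_l; lra).
  replace (q * beta * ((C - M) / (q * beta))) with (C - M) in * by (field; lra).
  lra.
Qed.

Lemma Gunder_continuous : cont_on_nonneg Gu.
Proof.
  apply locally_lipschitz_cont_on_nonneg. intros L HL.
  set (Ka := delta * q * beta * (WW L * (/ beta + Zc q W L))).
  set (Kb := q * beta * (Zc q W L + delta * L * WW L * (q * W L))).
  assert (HZ : 1 <= Zc q W L) by (apply Zc_ge_1; auto).
  assert (HWWL : 0 <= WW L) by (apply (W_nonneg WW); auto).
  assert (HWL : 0 <= W L) by (apply (W_nonneg W); auto).
  assert (0 < / beta) by (apply Rinv_0_lt_compat; lra).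
  assert (HKa : 0 <= Ka) by (unfold Ka; repeat apply Rmult_le_pos; lra).
  assert (0 <= delta * L * WW L * (q * W L)) by (repeat apply Rmult_le_pos; lra).
  assert (HKb : 0 <= Kb) by (unfold Kb; apply Rmult_le_pos; [nra | lra]).
  exists (Ka + Kb). split; [lra|].
  apply (min_value_lipschitz Gc Gu Gunder_is_min_Gammac L Ka Kb HKa).
  - intros. apply Gammac_lipschitz_a; assumption.
  - intros. apply Gammac_lipschitz_b; assumption.
Qed.

Lemma Gam_0_0 : G 0 0 = C.
Proof.
  rewrite Gam_eq_Gammac by lra. unfold Gammac, Zbarc. rewrite !RInt_point_R. ring.
Qed.

Lemma Gunder_0 : Gu 0 = C.
Proof.
  rewrite <- Gam_0_0. apply Gunder_at_strict_min; [lra|].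
  intros a Ha Hne. exfalso. lra.
Qed.

Lemma Gunder_unique_root :
  0 < C -> exists b, (0 < b /\ Gu b = 0) /\ forall b', 0 < b' -> Gu b' = 0 -> b' = b.
Proof.
  intro HC0. assert (Hqb : 0 < q * beta) by nra.
  apply (decreasing_unique_root Gu (C / (q * beta) + 1)).
  - exact Gunder_continuous.
  - exact Gunder_lt.
  - rewrite Gunder_0. exact HC0.
  - assert (0 < C / (q * beta)) by (apply Rdiv_lt_0_compat; lra). lra.
  - eapply Rle_lt_trans; [apply Gunder_le_linear|].
    + assert (0 < C / (q * beta)) by (apply Rdiv_lt_0_compat; lra). lra.
    + replace (C - q * beta * (C / (q * beta) + 1)) with (- (q * beta)) by (field; lra). lra.
Qed.

Lemma gam_lt a1 a2 b : 0 <= a1 -> a1 < a2 -> a2 <= b -> gam q beta W a1 b < gam q beta W a2 b.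
Proof.
  intros. rewrite !gam_eq_gamc by lra. apply gamc_lt; assumption.
Qed.

Lemma Gam_unique_minimizer b :
  0 < b -> exists a, (0 <= a <= b /\ G a b = Gu b) /\
    (forall a', 0 <= a' <= b -> G a' b = Gu b -> a' = a) /\
    (a = 0 \/ (0 < a < b /\ gam q beta W a b = 0 /\
                forall a', 0 < a' < b -> gam q beta W a' b = 0 -> a' = a)).
Proof.
  intro Hb. destruct (Gam_strict_min b ltac:(lra)) as [m [Hm [Hmin Hcase]]].
  rewrite (Gunder_at_strict_min b m Hm Hmin).
  exists m. split; [split; [exact Hm | reflexivity]|]. split.
  - intros a' Ha' E'. destruct (Req_dec a' m) as [-> | Hne]; [reflexivity|].
    assert (G m b < G a' b) by (apply Hmin; assumption). lra.
  - destruct Hcase as [[-> _] | [Hm' Hg]]; [left; reflexivity | right].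
    split; [exact Hm'|]. split; [exact Hg|].
    intros a' Ha' Hg'. destruct (Rtotal_order a' m) as [Hlt | [Heq | Hgt]]; [| exact Heq |].
    + assert (gam q beta W a' b < gam q beta W m b) by (apply gam_lt; lra). lra.
    + assert (gam q beta W m b < gam q beta W a' b) by (apply gam_lt; lra). lra.
Qed.

Lemma aof_eq b m :
  0 <= m <= b -> (forall a, 0 <= a <= b -> a <> m -> G m b < G a b) ->
  aof q delta beta rho dpsiX WW W b = m.
Proof.
  intros Hm Hmin. unfold aof.
  assert (Hgu := Gunder_at_strict_min b m Hm Hmin).
  destruct (epsilon_spec (inhabits 0) (fun a => 0 <= a <= b /\ G a b = Gu b)
              (ex_intro _ m (conj Hm (eq_sym Hgu)))) as [Ha Ea].
  set (a := epsilon _ _) in *.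
  destruct (Req_dec a m) as [-> | Hne]; [reflexivity|].
  assert (G m b < G a b) by (apply Hmin; assumption). lra.
Qed.

Lemma astar_bstar_cases :
  let a_s := astar q delta beta rho dpsiX WW W in
  let b_s := bstar q delta beta rho dpsiX WW W in
  exactly_one3
    (a_s = 0 /\ b_s = 0 /\ C <= 0)
    (a_s = 0 /\ 0 < b_s /\ G 0 b_s = 0 /\ / beta - Zq q W b_s >= 0 /\ C > 0)
    (0 < a_s /\ a_s < b_s /\ G a_s b_s = 0 /\ gam q beta W a_s b_s = 0 /\ C > 0).
Proof.
  intros a_s b_s. apply exactly_one3_intro; [intuition lra .. |].
  unfold a_s, b_s, astar, bstar. rewrite Gam_0_0.
  destruct (Rle_dec C 0) as [HCn | HCp]; [left; lra|right].
  destruct (Gunder_unique_root ltac:(lra)) as [b0 [Hb0 _]].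
  destruct (epsilon_spec (inhabits 0) (fun b => 0 < b /\ Gu b = 0) (ex_intro _ b0 Hb0))
    as [Hbs Ebs].
  set (bs := epsilon _ _) in *.
  destruct (Gam_strict_min bs ltac:(lra)) as [m [Hm [Hmin Hcase]]].
  rewrite (aof_eq bs m Hm Hmin).
  assert (Gm : G m bs = 0) by (rewrite <- (Gunder_at_strict_min bs m Hm Hmin); exact Ebs).
  destruct Hcase as [[-> Hg] | [Hm' Hg]]; [left | right]; repeat split; lra.
Qed.

End Gamma.

Theorem mainTheorem3
  (psiY : R -> R) (dpsiY q delta beta rho : R) (WW W : R -> R)
  (HY : spos_levy_exponent psiY dpsiY)
  (Hq : 0 < q) (Hdelta : 0 < delta) (Hbeta : 0 < beta < 1)
  (HWW : is_scale_function psiY q WW)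
  (HW : is_scale_function (psiX psiY delta) q W) :
  let dpsiX := dpsiY + delta in
  let G := Gam q delta beta rho dpsiX WW W in
  let g := gam q beta W in
  let Gu := Gunder q delta beta rho dpsiX WW W in
  let a_s := astar q delta beta rho dpsiX WW W in
  let b_s := bstar q delta beta rho dpsiX WW W in
  (* underline Gamma is well defined (the minimum is attained) *)
  (forall b, 0 <= b -> is_min_value (fun a => G a b) 0 b (Gu b)) /\
  (* continuous, strictly decreasing, tends to -infty *)
  cont_on_nonneg Gu /\
  (forall b1 b2, 0 <= b1 -> b1 < b2 -> Gu b2 < Gu b1) /\
  (forall M, exists B, forall b, B <= b -> Gu b < M) /\
  (* unique minimizer, either 0 or the unique zero of gamma(.,b) in (0,b) *)
  (forall b, 0 < b ->
     exists a, (0 <= a <= b /\ G a b = Gu b) /\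
       (forall a', 0 <= a' <= b -> G a' b = Gu b -> a' = a) /\
       (a = 0 \/
        (0 < a < b /\ g a b = 0 /\
         forall a', 0 < a' < b -> g a' b = 0 -> a' = a))) /\
  (* Gamma(0,0) = delta - q rho - beta psi_X'(0+) *)
  G 0 0 = delta - q * rho - beta * dpsiX /\
  (* b^* well defined when Gamma(0,0) > 0 *)
  (0 < G 0 0 -> exists b, (0 < b /\ Gu b = 0) /\
                  forall b', 0 < b' -> Gu b' = 0 -> b' = b) /\
  exactly_one3
    (a_s = 0 /\ b_s = 0 /\ delta - q * rho - beta * dpsiX <= 0)
    (a_s = 0 /\ 0 < b_s /\ G 0 b_s = 0 /\ / beta - Zq q W b_s >= 0 /\
     delta - q * rho - beta * dpsiX > 0)
    (0 < a_s /\ a_s < b_s /\ G a_s b_s = 0 /\ g a_s b_s = 0 /\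
     delta - q * rho - beta * dpsiX > 0).
Proof.
  intros dpsiX G g Gu a_s b_s.
  assert (HpsiY := spos_levy_exponent_unbounded psiY dpsiY HY).
  assert (HpsiX := psiX_unbounded psiY delta (Rlt_le _ _ Hdelta) HpsiY).
  assert (HWW0 := scale_function_nonneg_at_0 _ _ _ HWW HpsiY).
  assert (HW0 := scale_function_nonneg_at_0 _ _ _ HW HpsiX).
  destruct HWW as [_ [HWWc [HWWinc _]]], HW as [_ [HWc [HWinc _]]].
  set (C := delta - q * rho - beta * dpsiX).
  assert (HC : C = delta - q * rho - beta * dpsiX) by reflexivity.
  assert (HG00 : G 0 0 = C) by (eapply Gam_0_0; eauto).
  refine (conj _ (conj _ (conj _ (conj _ (conj _ (conj HG00 (conj _ _))))))).
  - eapply Gunder_is_min; eauto.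
  - eapply Gunder_continuous; eauto.
  - eapply Gunder_lt; eauto.
  - eapply Gunder_to_neg_infty; eauto.
  - eapply Gam_unique_minimizer; eauto.
  - rewrite HG00. eapply Gunder_unique_root; eauto.
  - eapply astar_bstar_cases; eauto.
Qed.
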